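(* Consider the following permutation model $\mathcal V$ (in $\mathsf{ZFA}$ with choice in the ground). The set of atoms is $A=\bigcup_{n\in\omega}P_n$, where $P_n=\{a_n,b_n,c_n\}$ are pairwise disjoint 3-element sets, each carrying the cyclic order $a_n\to b_n\to c_n\to a_n$. Let $G$ be the group of all permutations $\pi$ of $A$ such that $\pi[P_n]=P_n$ for all $n$ and $\pi$ preserves each cyclic ordering (i.e. $\pi\restriction P_n$ is a power of the 3-cycle $(a_n\,b_n\,c_n)$ for every $n$). Let $\mathcal V$ be the class of hereditarily symmetric sets with respect to finite supports. Let $\mathfrak m=|A|$. Then in $\mathcal V$: $$[\mathfrak m]^2<\mathfrak m^2<\mathrm{seq}^{1-1}(\mathfrak m)<\mathrm{fin}(\mathfrak m).$$
   Context: Permutation model: $\pi\in G$ acts on sets by $\pi x=\{\pi y:y\in x\}$; $\mathrm{Fix}_G(E)=\{\pi\in G:\pi a=a\ \forall a\in E\}$; a set $x$ is symmetric if for some finite $E\subseteq A$, every $\pi\in\mathrm{Fix}_G(E)$ satisfies $\pi x=x$; $\mathcal V$ is the class of hereditarily symmetric sets. For a set $M$: $M^2=M\times M$, $[M]^2$ = 2-element subsets, $\mathrm{seq}^{1-1}(M)$ = finite sequences without repetition, $\mathrm{fin}(M)$ = finite subsets; for $\mathfrak m=|M|$ the corresponding symbols denote cardinalities. $|X|<|Y|$ means an injection $X\to Y$ exists but no bijection. *)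

From HB Require Import structures.
From mathcomp Require Import all_boot all_order all_algebra.
From mathcomp Require Import finmap.
Set Implicit Arguments. Unset Strict Implicit. Unset Printing Implicit Defensive.
Import GRing.Theory.

(* Atoms: A = \bigcup_n P_n with P_n = {a_n, b_n, c_n}; the atom (n, i) is
   a_n, b_n, c_n for i = 0, 1, 2 respectively; the cyclic order is i -> i+1 (mod 3). *)
Definition Atom := (nat * 'I_3)%type.

(* An element of G is a permutation pi of A with pi[P_n] = P_n and
   pi|P_n = (a_n b_n c_n)^(g n); we record it by its exponents g. *)
Definition Gelt := nat -> 'I_3.

Definition gact (g : Gelt) (a : Atom) : Atom := (a.1, (a.2 + g a.1)%R).

Definition fixes (g : Gelt) (E : {fset Atom}) : Prop :=
  forall a, a \in E -> gact g a = a.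

(* Sets in the model on which G acts (by pi x = {pi y : y in x}). *)
Record GSet := { carrier :> Type; act : Gelt -> carrier -> carrier }.

Definition AtomsG : GSet := {| carrier := Atom; act := gact |}.

Definition SquareG : GSet :=
  {| carrier := (Atom * Atom)%type;
     act := fun g p => (gact g p.1, gact g p.2) |}.

Definition pair2 := {s : {fset Atom} | #|` s| == 2}.
Definition pair2_act (g : Gelt) (s : pair2) : pair2 :=
  insubd s [fset gact g x | x in val s]%fset.
Definition Pair2G : GSet := {| carrier := pair2; act := pair2_act |}.

Definition useq := {s : seq Atom | uniq s}.
Definition useq_act (g : Gelt) (s : useq) : useq :=
  insubd s (map (gact g) (val s)).
Definition SeqG : GSet := {| carrier := useq; act := useq_act |}.

Definition FinG : GSet :=
  {| carrier := {fset Atom};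
     act := fun g s => [fset gact g x | x in s]%fset |}.

(* A function f : X -> Y belongs to V iff its graph is symmetric, i.e. for some
   finite support E, every pi in Fix_G(E) satisfies pi f = f, i.e.
   f (pi x) = pi (f x). *)
Definition symmetric_fun (X Y : GSet) (f : X -> Y) : Prop :=
  exists E : {fset Atom}, forall g, fixes g E ->
    forall x : X, f (act g x) = act g (f x).

Definition card_le_V (X Y : GSet) : Prop :=
  exists f : X -> Y, symmetric_fun f /\ injective f.
Definition card_lt_V (X Y : GSet) : Prop :=
  card_le_V X Y /\ ~ (exists f : X -> Y, symmetric_fun f /\ bijective f).

(* Symmetry with support E only constrains the blocks below E.  Rotating one
   block P_k above E fixes exactly the objects with no atom in P_k, and a
   symmetric injection preserves and reflects this.  Two objects whose atoms
   above E have the same block pattern are conjugate under Fix_G(E).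

   Orienting a 2-set (by block index, or inside a block by the cyclic order)
   gives [m]^2 <= m^2, and (x, y) |-> [x; y] without repetition gives
   m^2 <= seq(m).  A sequence s goes to its leaders (its first atom in each
   block it meets) together with a whole block P_c, where c lies above the
   blocks of s and encodes the offsets of s from its leaders; all of this is
   invariant and determines s.

   No reverse symmetric injection exists.  Into [m]^2, the images of
   (a_n, a_(n+1)) and (a_(n+1), a_n) with n above E would be conjugate 2-sets,
   making the two pairs conjugate.  Into m^2, two of [a_n; a_(n+1)],
   [a_(n+1); a_n] and [a_n; b_n; a_(n+1)] would get images with the same block
   pattern, making their block sequences equal.  Into seq(m), the image of each
   G-invariant block P_j only uses atoms below E, and there are only finitely
   many such sequences. *)

From mathcomp Require Import all_boot all_order all_algebra.
From mathcomp Require Import finmap zify.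
Set Implicit Arguments.
Unset Strict Implicit.
Unset Printing Implicit Defensive.
Import GRing.Theory.
Local Open Scope fset_scope.

Lemma gact_inj g : injective (gact g).
Proof. by move=> [n i] [m j] e; move: (congr1 fst e) (congr1 snd e) => /= <- /addIr ->. Qed.

Lemma val_useq_act g s : val (useq_act g s) = map (gact g) (val s).
Proof. by rewrite insubdK // -topredE /= (map_inj_uniq (@gact_inj g)) (valP s). Qed.

Lemma val_pair2_act g p : val (pair2_act g p) = gact g @` val p.
Proof.
rewrite insubdK // -topredE /= -[X in _ == X](eqP (valP p)).
by apply/eqP/card_in_imfset => x y _ _; exact: gact_inj.
Qed.

Lemma symmetric_fun_can (X Y : GSet) (f : X -> Y) (f' : Y -> X) :
  cancel f f' -> cancel f' f -> symmetric_fun f -> symmetric_fun f'.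
Proof.
move=> fK f'K [E f_sym]; exists E => g gE y.
by rewrite -{1}(f'K y) -f_sym // fK.
Qed.

Lemma card_lt_VI (X Y : GSet) : card_le_V X Y ->
  ~ (exists F : Y -> X, symmetric_fun F /\ injective F) -> card_lt_V X Y.
Proof.
move=> XY noYX; split=> // -[f [f_sym [f' fK f'K]]]; apply: noYX.
by exists f'; split; [exact: symmetric_fun_can f_sym | exact: can_inj f'K].
Qed.

(** * Blocks, rotations and transport *)

Definition block_bound (E : {fset Atom}) : nat := (\max_(a <- E) a.1).+1.

Lemma fixes_block_bound g E : (forall k, k < block_bound E -> g k = 0%R) -> fixes g E.
Proof.
move=> g0 [k i] kE; rewrite /gact /= g0 ?addr0 // ltnS.
exact: (@leq_bigmax_seq _ _ predT (fun a : Atom => a.1) (k, i)).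
Qed.

Definition rot_block (k : nat) : Gelt := fun j => if j == k then 1%R else 0%R.

Lemma rot_block_fixes E k : block_bound E <= k -> fixes (rot_block k) E.
Proof.
by move=> Ek; apply: fixes_block_bound => j jE; rewrite /rot_block; case: eqP => // jk; lia.
Qed.

Lemma gact_rot_block k x : (gact (rot_block k) x == x) = (x.1 != k).
Proof.
case: x => n i; rewrite /gact /rot_block /= xpair_eqE eqxx /=.
by case: (n =P k) => _; [case: i => [[|[|[|]]]] | rewrite addr0 eqxx].
Qed.

Definition avoids_block {X : GSet} (k : nat) (x : X) : Prop := act (rot_block k) x = x.

Section SymmetricInjection.

Variables (X Y : GSet) (F : X -> Y) (E : {fset Atom}).
Hypothesis F_sym : forall g, fixes g E -> forall x, F (act g x) = act g (F x).
Hypothesis F_inj : injective F.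

Lemma avoids_block_sym k x : block_bound E <= k -> avoids_block k (F x) <-> avoids_block k x.
Proof.
move=> Ek; rewrite /avoids_block -F_sym; last exact: rot_block_fixes.
by split=> [/F_inj | ->].
Qed.

Lemma sym_inj_act g x y : fixes g E -> act g (F x) = F y -> act g x = y.
Proof. by move=> gE; rewrite -F_sym // => /F_inj. Qed.

End SymmetricInjection.

Lemma avoids_squareP k (p : SquareG) :
  reflect (avoids_block k p) ((p.1.1 != k) && (p.2.1 != k)).
Proof. by case: p => x y; rewrite -!gact_rot_block -xpair_eqE; apply: eqP. Qed.

Lemma map_id_eq (T : eqType) (f : T -> T) s : (map f s == s) = all (fun x => f x == x) s.
Proof. by elim: s => //= x s IH; rewrite eqseq_cons IH. Qed.

Lemma avoids_useqP k (s : SeqG) : reflect (avoids_block k s) (k \notin map fst (val s)).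
Proof.
rewrite -has_pred1 has_map -all_predC -(eq_all (gact_rot_block k)) -map_id_eq -val_useq_act.
by apply: (iffP eqP) => [/val_inj | /(congr1 val)].
Qed.

Lemma avoids_pair2 k (p : Pair2G) : {in val p, forall x, x.1 != k} -> avoids_block k p.
Proof.
move=> pk; apply: val_inj; rewrite /= val_pair2_act -[RHS]imfset_id.
by apply: eq_in_imfset => x /pk; rewrite -gact_rot_block => /eqP.
Qed.

Definition block (m : nat) : {fset Atom} := [fset (m, i) | i : 'I_3].

Lemma mem_block m x : (x \in block m) = (x.1 == m).
Proof.
case: x => n i; apply/imfsetP/eqP => /= [[j _ [-> _]] // | ->].
by exists i.
Qed.

Lemma gact_block g m : gact g @` block m = block m.
Proof.
apply/fsetP => x; rewrite mem_block; apply/imfsetP/eqP => [[y] | xm].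
  by rewrite mem_block => /eqP <- ->.
by exists (x.1, x.2 - g x.1)%R; [rewrite mem_block xm | rewrite /gact subrK; case: x {xm}].
Qed.

Lemma exists_transport E x x' y y' :
  x.1 != y.1 -> block_bound E <= x.1 -> block_bound E <= y.1 -> x'.1 = x.1 -> y'.1 = y.1 ->
  exists2 g, fixes g E & gact g x = x' /\ gact g y = y'.
Proof.
move=> /negPf xy Ex Ey xx' yy'.
exists (fun j => if j == x.1 then x'.2 - x.2 else if j == y.1 then y'.2 - y.2 else 0)%R.
  by apply: fixes_block_bound => j jE; case: (j =P x.1); case: (j =P y.1) => //; lia.
rewrite /gact /= eqxx eq_sym xy eqxx !(addrC _ (_ - _)%R) !subrK -xx' -yy'.
by case: x' {xx'}; case: y' {yy'}.
Qed.

Lemma square_transport E (p q : SquareG) :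
  p.1.1 != p.2.1 -> block_bound E <= p.1.1 -> block_bound E <= p.2.1 ->
  q.1.1 = p.1.1 -> q.2.1 = p.2.1 -> exists2 g, fixes g E & act g p = q.
Proof.
move=> ne E1 E2 e1 e2; have [g gE [g1 g2]] := exists_transport ne E1 E2 e1 e2.
by exists g => //=; rewrite g1 g2; case: q {e1 e2 g1 g2}.
Qed.

(** * 2-sets and ordered pairs *)

Definition precedes (x y : Atom) : bool :=
  (x.1 < y.1) || (x.1 == y.1) && (y.2 == x.2 + 1)%R.

Definition orient (x y : Atom) : Atom * Atom := if precedes x y then (x, y) else (y, x).

Lemma precedes_gact g x y : precedes (gact g x) (gact g y) = precedes x y.
Proof.
by rewrite /precedes /=; case: (x.1 =P y.1) => //= ->; rewrite addrAC (inj_eq (addIr _)).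
Qed.

Lemma orient_gact g x y :
  orient (gact g x) (gact g y) = (gact g (orient x y).1, gact g (orient x y).2).
Proof. by rewrite /orient precedes_gact; case: ifP. Qed.

Lemma orientC x y : x != y -> orient x y = orient y x.
Proof.
case: x y => [n i] [m j]; rewrite /orient /precedes /= xpair_eqE.
case: (ltngtP n m) => //= <-.
by case: i => [[|[|[|]]] ?]; case: j => [[|[|[|]]] ?].
Qed.

Lemma fset2_orient x y : [fset (orient x y).1; (orient x y).2] = [fset x; y].
Proof. by rewrite /orient; case: ifP => //= _; rewrite fsetUC. Qed.

Lemma fset2_eq (K : choiceType) (a b x y : K) :
  a != b -> [fset a; b] = [fset x; y] -> (a, b) = (x, y) \/ (a, b) = (y, x).
Proof.
move=> + e; have: a \in [fset x; y] by rewrite -e fset21.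
have: b \in [fset x; y] by rewrite -e fset22.
by rewrite !in_fset2 => /orP[]/eqP-> /orP[]/eqP->; rewrite ?eqxx //; by [left | right].
Qed.

Lemma pair2_enum (p : pair2) :
  exists x y, [/\ x != y, enum_fset (val p) = [:: x; y] & val p = [fset x; y]].
Proof.
case: p => S /= /eqP; rewrite -[#|` S|]/(size (enum_fset S)).
case e: (enum_fset S) (fset_uniq S) => [|x [|y []]] //= /andP[]; rewrite inE => xy _ _.
exists x, y; split=> //; apply/fsetP => z.
by rewrite in_fset2 -[z \in S]/(z \in enum_fset S) e !inE.
Qed.

Lemma pair2_fset2 (p : pair2) x y :
  x \in val p -> y \in val p -> x != y -> val p = [fset x; y].
Proof.
have [a [b [_ _ ->]]] := pair2_enum p.
by rewrite !in_fset2 => /orP[]/eqP-> /orP[]/eqP->; rewrite ?eqxx // fsetUC.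
Qed.

(* The fallback value is never used: [val p] has exactly two elements. *)
Definition pair2_to_square (p : pair2) : Atom * Atom :=
  if enum_fset (val p) is [:: x; y] then orient x y else ((0, 0), (0, 0))%R.

Lemma pair2_to_squareE (p : pair2) x y :
  x != y -> val p = [fset x; y] -> pair2_to_square p = orient x y.
Proof.
have [a [b [ab e ->]]] := pair2_enum p; rewrite /pair2_to_square e => xy.
by case/(fset2_eq ab) => -[-> ->]; last rewrite orientC // eq_sym.
Qed.

Lemma pair2_le_square : card_le_V Pair2G SquareG.
Proof.
exists pair2_to_square; split.
  exists fset0 => g _ p; have [x [y [xy _ pxy]]] := pair2_enum p.
  rewrite (pair2_to_squareE xy pxy) /= -orient_gact; apply: pair2_to_squareE.
    by rewrite (inj_eq (@gact_inj g)).
  by rewrite /= val_pair2_act pxy imfset_fset2.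
move=> p q pq; apply: val_inj.
have [x [y [xy _ pxy]]] := pair2_enum p; have [x' [y' [xy' _ qxy]]] := pair2_enum q.
rewrite pxy qxy -fset2_orient -[RHS]fset2_orient.
by rewrite -(pair2_to_squareE xy pxy) -(pair2_to_squareE xy' qxy) pq.
Qed.

Lemma no_symmetric_injection_square_pair2 :
  ~ exists F : SquareG -> Pair2G, symmetric_fun F /\ injective F.
Proof.
move=> [F [[E F_sym] F_inj]].
have meets (u : SquareG) k : block_bound E <= k -> (u.1.1 == k) || (u.2.1 == k) ->
    exists2 x, x \in val (F u) & x.1 = k.
  move=> Ek uk; have /hasP[x xu /eqP xk] : has (fun x => x.1 == k) (val (F u)).
    apply: contraLR uk => /hasPn Fu_k; rewrite negb_or; apply/avoids_squareP.
    by rewrite -(avoids_block_sym F_sym F_inj _ Ek); apply: avoids_pair2.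
  by exists x.
pose n := block_bound E; pose u : SquareG := ((n, 0), (n.+1, 0))%R; pose v : SquareG := (u.2, u.1).
have [x xu xn] : exists2 x, x \in val (F u) & x.1 = n by apply: meets; rewrite /= ?eqxx.
have [y yu yn] : exists2 y, y \in val (F u) & y.1 = n.+1 by apply: meets; rewrite /= ?eqxx ?orbT.
have [x' xv xn'] : exists2 x, x \in val (F v) & x.1 = n by apply: meets; rewrite /= ?eqxx ?orbT.
have [y' yv yn'] : exists2 y, y \in val (F v) & y.1 = n.+1 by apply: meets; rewrite /= ?eqxx.
have ne (a b : Atom) : a.1 = n -> b.1 = n.+1 -> a != b.
  by move=> an bn; apply/eqP => ab; move: bn; rewrite -ab an; lia.
have [h hE [hx hy]] : exists2 h, fixes h E & gact h x = x' /\ gact h y = y'.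
  by apply: exists_transport; rewrite ?xn ?yn ?xn' ?yn' ?ltn_eqF.
have /(congr1 (fun w : SquareG => w.1.1)) /= : act h u = v.
  apply: (sym_inj_act F_sym F_inj hE); apply: val_inj.
  rewrite /= val_pair2_act (pair2_fset2 xu yu (ne _ _ xn yn)).
  by rewrite (pair2_fset2 xv yv (ne _ _ xn' yn')) imfset_fset2 hx hy.
lia.
Qed.

(** * Ordered pairs and sequences *)

Definition square_to_seq (p : Atom * Atom) : useq :=
  exist _ (undup [:: p.1; p.2]) (undup_uniq _).

Lemma square_le_seq : card_le_V SquareG SeqG.
Proof.
exists square_to_seq; split.
  exists fset0 => g _ p; apply: val_inj.
  by rewrite /= val_useq_act -undup_map_inj //; exact: gact_inj.
move=> [x y] [x' y'] /(congr1 val) /=; rewrite !inE.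
by case: (x =P y) => [->|_]; case: (x' =P y') => [->|_] //; case=> -> // ->.
Qed.

Lemma no_symmetric_injection_seq_square :
  ~ exists F : SeqG -> SquareG, symmetric_fun F /\ injective F.
Proof.
move=> [F [[E F_sym] F_inj]].
have meets (s : SeqG) k : block_bound E <= k -> k \in map fst (val s) ->
    ((F s).1.1 == k) || ((F s).2.1 == k).
  move=> Ek; apply: contraLR; rewrite negb_or => /avoids_squareP.
  by rewrite (avoids_block_sym F_sym F_inj _ Ek) => /avoids_useqP.
pose n := block_bound E.
pose both (s : SeqG) := (n \in map fst (val s)) && (n.+1 \in map fst (val s)).
have shape (s : SeqG) : both s ->
    [/\ (F s).1.1 != (F s).2.1, n <= (F s).1.1 <= n.+1 & n <= (F s).2.1 <= n.+1].
  by case/andP => /(meets _ _ (leqnn n)) + /(meets _ _ (leqnSn n)); split; lia.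
have same_shape (s t : SeqG) : both s -> both t ->
    (F s).1.1 = (F t).1.1 -> map fst (val s) = map fst (val t).
  move=> /shape[ne s1 s2] /shape[ne' t1 t2] st.
  have [g gE /(sym_inj_act F_sym F_inj gE) <-] : exists2 g, fixes g E & act g (F s) = F t.
    by apply: square_transport; rewrite -/n; lia.
  by rewrite /= val_useq_act -map_comp.
pose a : Atom := (n, 0%R); pose b : Atom := (n, 1%R); pose c : Atom := (n.+1, 0%R).
have ac : uniq [:: a; c] by rewrite /= inE xpair_eqE ltn_eqF.
have ca : uniq [:: c; a] by rewrite /= inE xpair_eqE gtn_eqF.
have abc : uniq [:: a; b; c] by rewrite /= !inE !xpair_eqE (ltn_eqF (ltnSn n)) !andbF.
pose s1 : useq := Sub _ ac; pose s2 : useq := Sub _ ca; pose s3 : useq := Sub _ abc.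
have [b1 b2 b3] : [/\ both s1, both s2 & both s3] by rewrite /both /= !inE !eqxx ?orbT.
(* Three sequences, but only two possible block patterns for their images. *)
have := shape _ b1; have := shape _ b2; have := shape _ b3.
move=> [_ /andP[? ?] _] [_ /andP[? ?] _] [_ /andP[? ?] _].
have [e | [e | e]] :
  (F s1).1.1 = (F s2).1.1 \/ (F s1).1.1 = (F s3).1.1 \/ (F s2).1.1 = (F s3).1.1 by lia.
- by move: (same_shape _ _ b1 b2 e) => -[] /eqP; rewrite ltn_eqF.
- by move: (same_shape _ _ b1 b3 e).
- by move: (same_shape _ _ b2 b3 e).
Qed.

(** * Sequences and finite sets *)

Definition leader (s : seq Atom) (n : nat) : option Atom := ohead [seq x <- s | x.1 == n].

Definition leaders (s : seq Atom) : {fset Atom} := [fset x in s | leader s x.1 == Some x].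

Definition offset (s : seq Atom) (x : Atom) : Atom :=
  (x.1, x.2 - oapp snd 0 (leader s x.1))%R.

(* A block index above all blocks of [s] which also encodes the (invariant)
   offsets of [s] from its leaders. *)
Definition code_block (s : seq Atom) : nat :=
  (\max_(x <- s) x.1).+1 + choice.pickle (map (offset s) s).

Definition seq_to_fin (s : useq) : {fset Atom} :=
  leaders (val s) `|` block (code_block (val s)).

Lemma leader_map g s n : leader (map (gact g) s) n = omap (gact g) (leader s n).
Proof. by rewrite /leader filter_map; case: [seq x <- s | x.1 == n]. Qed.

Lemma leaderP s n x : leader s n = Some x -> x \in s /\ x.1 = n.
Proof.
rewrite /leader; case e: [seq y <- s | y.1 == n] => [|y t] //= [<-].
by have /[!mem_filter] /andP[/eqP] : y \in [seq y <- s | y.1 == n] by rewrite e mem_head.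
Qed.

Lemma leader_mem s x : x \in s -> exists y, leader s x.1 = Some y.
Proof.
rewrite /leader => xs; have : x \in [seq y <- s | y.1 == x.1] by rewrite mem_filter eqxx.
by case: [seq y <- s | y.1 == x.1] => // y t _; exists y.
Qed.

Lemma mem_leaders s x : (x \in leaders s) = (leader s x.1 == Some x).
Proof. by rewrite !inE andb_idl // => /eqP/leaderP[]. Qed.

Lemma mem_leaders_map g s x : (gact g x \in leaders (map (gact g) s)) = (x \in leaders s).
Proof.
rewrite !mem_leaders leader_map -[Some (gact g x)]/(omap (gact g) (Some x)).
exact/inj_eq/inj_omap/gact_inj.
Qed.

Lemma leaders_map g s : leaders (map (gact g) s) = gact g @` leaders s.
Proof.
apply/fsetP => y; apply/idP/imfsetP => [yl | [x xl ->]]; last by rewrite mem_leaders_map.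
have /mapP[x _ yx] : y \in map (gact g) s by move: yl; rewrite inE => /andP[].
by exists x; rewrite // -(mem_leaders_map g) -yx.
Qed.

Lemma offset_map g s x : x \in s -> offset (map (gact g) s) (gact g x) = offset s x.
Proof.
move=> /leader_mem[y e]; have [_ yx] := leaderP e.
by rewrite /offset leader_map /= e /= yx opprD addrACA subrr addr0.
Qed.

Lemma code_block_map g s : code_block (map (gact g) s) = code_block s.
Proof.
rewrite /code_block big_map -map_comp (_ : map _ s = map (offset s) s) //.
by apply/eq_in_map => x; apply: offset_map.
Qed.

Lemma offset_inj s : injective (offset s).
Proof. by move=> [n i] [m j] e; move: (congr1 fst e) (congr1 snd e) => /= <- /addIr ->. Qed.

Lemma leaders_block_inj s x y : x \in leaders s -> y \in leaders s -> x.1 = y.1 -> x = y.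
Proof. by move=> + + e; rewrite !mem_leaders e => /eqP -> /eqP[]. Qed.

Lemma mem_lt_code_block s x : x \in s -> x.1 < code_block s.
Proof.
move=> xs; apply: ltn_addr; rewrite ltnS.
exact: (@leq_bigmax_seq _ _ predT (fun x : Atom => x.1)).
Qed.

Lemma leader_leaders s t : leaders s = leaders t -> leader s =1 leader t.
Proof.
suff sub u v : leaders u = leaders v -> forall n x, leader u n = Some x -> leader v n = Some x.
  move=> st n; case e: (leader s n) => [x|]; first by rewrite (sub _ _ st _ _ e).
  by case e': (leader t n) => [y|] //; rewrite (sub _ _ (esym st) _ _ e') in e.
move=> uv n x e; have [_ xn] := leaderP e.
have : x \in leaders u by rewrite mem_leaders xn e.
by rewrite uv mem_leaders xn => /eqP.
Qed.

Lemma bigmax_leader s t : leader s =1 leader t -> \max_(x <- s) x.1 = \max_(x <- t) x.1.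
Proof.
suff le u v : leader u =1 leader v -> \max_(x <- u) x.1 <= \max_(x <- v) x.1.
  by move=> st; apply/eqP; rewrite eqn_leq !le // => n; rewrite st.
move=> uv; apply/bigmax_leqP_seq => x xu _.
have [y e] := leader_mem xu; have [yv yx] := leaderP (etrans (esym (uv _)) e).
by rewrite -yx; apply: (@leq_bigmax_seq _ _ predT (fun x : Atom => x.1)).
Qed.

Lemma seq_to_fin_sym : @symmetric_fun SeqG FinG seq_to_fin.
Proof.
exists fset0 => g _ s.
by rewrite /= /seq_to_fin val_useq_act leaders_map code_block_map imfsetU gact_block.
Qed.

Lemma code_block_seq_to_fin s m :
  (m, 0%R) \in seq_to_fin s -> (m, 1%R) \in seq_to_fin s -> m = code_block (val s).
Proof.
rewrite !in_fsetU !mem_block /=; case: eqP => // _; rewrite !orbF => l0 l1.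
by move/(congr1 (val \o snd)): (leaders_block_inj l0 l1 erefl).
Qed.

Lemma leaders_seq_to_fin s :
  leaders (val s) = [fset x in seq_to_fin s | x.1 != code_block (val s)].
Proof.
apply/fsetP => x; rewrite !inE mem_block.
case: (x.1 =P _) => [xc|_]; rewrite ?andbF ?andbT ?orbF //.
by apply/negbTE/negP => /andP[/mem_lt_code_block]; rewrite xc ltnn.
Qed.

Lemma seq_to_fin_inj : injective seq_to_fin.
Proof.
move=> s t st.
have cst : code_block (val s) = code_block (val t).
  by apply: code_block_seq_to_fin; rewrite -st in_fsetU mem_block eqxx orbT.
have lst : leader (val s) =1 leader (val t).
  by apply: leader_leaders; rewrite !leaders_seq_to_fin st cst.
move: cst; rewrite /code_block (bigmax_leader lst) => /addnI /(pcan_inj (@choice.pickleK _)).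
rewrite (eq_map (_ : offset (val s) =1 offset (val t))) => [|x]; last by rewrite /offset lst.
by move/(inj_map (@offset_inj _))/val_inj.
Qed.

Lemma seq_le_fin : card_le_V SeqG FinG.
Proof. by exists seq_to_fin; split; [exact: seq_to_fin_sym | exact: seq_to_fin_inj]. Qed.

Lemma uniq_seqs_finite (T : choiceType) (L : seq T) :
  exists X : seq (seq T), forall s, uniq s -> {subset s <= L} -> s \in X.
Proof.
exists (flatten [seq permutations (enum_fset P) | P : {fset T} <- fpowerset [fset x in L]]).
move=> s us sL.
apply/flatten_mapP; exists [fset x in s].
  by rewrite fpowersetE; apply/fsubsetP => x; rewrite !inE; apply: sL.
rewrite mem_permutations; apply: uniq_perm => // x.
by rewrite -[x \in enum_fset _]/(x \in [fset x in s]) inE.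
Qed.

Lemma no_symmetric_injection_fin_seq :
  ~ exists F : FinG -> SeqG, symmetric_fun F /\ injective F.
Proof.
move=> [F [[E F_sym] F_inj]].
have low m x : x \in val (F (block m)) -> x.1 < block_bound E.
  move=> xF; rewrite ltnNge; apply/negP => Ex.
  have /avoids_useqP/negP[] : avoids_block x.1 (F (block m)).
    by apply/(avoids_block_sym F_sym F_inj _ Ex); apply: gact_block.
  exact: map_f.
have [X inX] := uniq_seqs_finite [seq (k, i) | k <- iota 0 (block_bound E), i <- enum 'I_3].
pose W := [seq val (F (block m)) | m <- iota 0 (size X).+1].
have : size W <= size X.
  apply: uniq_leq_size.
    rewrite map_inj_uniq ?iota_uniq // => m m' /val_inj/F_inj/(congr1 (fun S => (m, 0%R) \in S)).
    by rewrite !mem_block eqxx => /esym/eqP.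
  move=> _ /mapP[m _ ->]; apply: inX; first exact: valP.
  move=> x /low xE; apply/allpairsP; exists (x.1, x.2).
  by rewrite mem_iota mem_enum xE; case: x {xE}.
by rewrite size_map size_iota ltnn.
Qed.

Theorem mainTheorem11 :
  card_lt_V Pair2G SquareG /\ card_lt_V SquareG SeqG /\ card_lt_V SeqG FinG.
Proof.
split; [|split]; apply: card_lt_VI.
- exact: pair2_le_square.
- exact: no_symmetric_injection_square_pair2.
- exact: square_le_seq.
- exact: no_symmetric_injection_seq_square.
- exact: seq_le_fin.
- exact: no_symmetric_injection_fin_seq.
Qed.
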